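(* Let $p_{\pm1}:E\to E_{\pm1}$, $x\mapsto x_{\pm1}$, and $p^-:E\to E_1\oplus E_{-1}=E^-$, $x\mapsto x_1+x_{-1}=\frac12(x-\tau x)$. Then: (i) $p_{\pm1}(C)=\pm C_\pm$ and $p_{\pm1}(C^0)=\pm C^0_\pm\neq\emptyset$; (ii) $p^-(C)=C\cap E^-=C_+\oplus(-C_-)$ and $p^-(C^0)=C^0\cap E^-=C_+^0\oplus(-C_-^0)$; (iii) $C\subseteq C_+\oplus E_0\oplus(-C_-)$.
   Context: $E$ finite-dimensional real vector space; $h\in\mathrm{End}(E)$ diagonalizable with eigenvalues in $\{-1,0,1\}$, $E_j=\ker(h-j\,\mathrm{id})$, $x=x_1+x_0+x_{-1}$; $\tau=e^{\pi ih}$ ($\mathrm{id}$ on $E_0$, $-\mathrm{id}$ on $E_1\oplus E_{-1}$); $C\subseteq E$ pointed generating closed convex cone with $e^{th}C=C$ for all $t$ and $-\tau(C)=C$; $C^0$ interior of $C$; $C_\pm=\pm C\cap E_{\pm1}$ and $C_\pm^0$ their interiors relative to $E_{\pm1}$. *)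

From HB Require Import structures.
From mathcomp Require Import all_boot all_order all_algebra.
From mathcomp Require Import all_classical all_reals all_analysis.
Set Implicit Arguments. Unset Strict Implicit. Unset Printing Implicit Defensive.
Import Order.TTheory GRing.Theory Num.Theory.
Import numFieldNormedType.Exports.
Local Open Scope classical_set_scope.
Local Open Scope ring_scope.

(* E = 'rV[R]_n (row vectors), h acts on the right: x |-> x *m h. *)
Section Defs.
Variables (R : realType) (n : nat).
Implicit Types (h : 'M[R]_n) (C A : set 'rV[R]_n) (x : 'rV[R]_n).

Definition eigsp h (j : R) : set 'rV[R]_n := [set x | x *m h = j *: x].

(* the components x_1, x_0, x_{-1} of x = x_1 + x_0 + x_{-1}
   (valid when h is diagonalizable with eigenvalues in {-1,0,1}) *)
Definition p1 h x : 'rV[R]_n := 2^-1 *: (x *m h + x *m (h *m h)).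
Definition pm1 h x : 'rV[R]_n := 2^-1 *: (x *m (h *m h) - x *m h).
Definition p0 h x : 'rV[R]_n := x - x *m (h *m h).
Definition pminus h x : 'rV[R]_n := p1 h x + pm1 h x.
(* tau = e^{pi i h}: id on E_0, -id on E_1 (+) E_{-1} *)
Definition tau h x : 'rV[R]_n := p0 h x - p1 h x - pm1 h x.

Definition matexp (A : 'M[R]_n) : 'M[R]_n :=
  lim ((fun N : nat => \sum_(k < N) (k`!%:R)^-1 *: A ^+ k) @ \oo).

Definition convex_cone C :=
  C 0 /\ (forall x y, C x -> C y -> C (x + y)) /\
  (forall (a : R) x, 0 <= a -> C x -> C (a *: x)).
Definition pointed C := forall x, C x -> C (- x) -> x = 0.
Definition generating C := forall x, exists a b, C a /\ C b /\ x = a - b.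

Definition relint (V A : set 'rV[R]_n) : set 'rV[R]_n :=
  [set x | exists U : set 'rV[R]_n, open U /\ U x /\ U `&` V `<=` A] `&` V.

Definition setopp A : set 'rV[R]_n := (fun x => - x) @` A.
Definition setadd (A B : set 'rV[R]_n) : set 'rV[R]_n :=
  [set z | exists a b, A a /\ B b /\ z = a + b].

End Defs.

(* Since [h] is diagonalizable with eigenvalues in {-1, 0, 1}, [h^3 = h], and
   the projections onto [E_1], [E_-1], [E_0] are the polynomials
   [P_1 = (h + h^2)/2], [P_-1 = (h^2 - h)/2], [P_0 = 1 - h^2]; hence
   [e^{th} = P_0 + e^t P_1 + e^-t P_-1] and [p^- = h^2 = (1 - tau)/2].
   Rescaling [e^{th} x] by [e^-|t|] and letting [|t|] go to infinity shows that
   the closed cone [C] is invariant under [P_1] and [P_-1], and its invariance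
   under [-tau] makes [C] and [C^0] invariant under [h^2].  Everything then
   follows from two facts on an idempotent [M] leaving invariant a convex cone
   [C] with nonempty interior (here [C] is generating): [M C = C \cap Fix M],
   and [M C^0] is the interior of [C \cap Fix M] relative to [Fix M]. *)

From HB Require Import structures.
From mathcomp Require Import all_boot all_order all_algebra.
From mathcomp Require Import all_classical all_reals all_analysis.
From mathcomp Require Import ring lra.
Set Implicit Arguments.
Unset Strict Implicit.
Unset Printing Implicit Defensive.

Import Order.TTheory GRing.Theory Num.Theory.
Import numFieldNormedType.Exports.
Local Open Scope classical_set_scope.
Local Open Scope ring_scope.

Definition fixmx (R : pzRingType) (n : nat) (M : 'M[R]_n) : set 'rV[R]_n :=
  [set x | x *m M = x].

Lemma interior_pullback (T U : topologicalType) (A : set T) (B : set U)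
    (g : T -> U) z :
  {for z, continuous g} -> interior B (g z) -> g @^-1` B `<=` A -> interior A z.
Proof. by move=> gz Bgz gBA; exact: filterS gBA (gz _ Bgz). Qed.

Section RowVectors.
Variables (R : realType) (n : nat).
Implicit Types (A : set 'rV[R]_n) (M : 'M[R]_n) (a b c v x y : 'rV[R]_n).

Lemma exprZmx (t : R) M k : (t *: M) ^+ k = t ^+ k *: M ^+ k.
Proof.
elim: k => [|k IH]; first by rewrite !expr0 scale1r.
by rewrite !exprS IH -!mulmxE -scalemxAl -scalemxAr scalerA.
Qed.

Lemma mulmx_continuous M : continuous (mulmx^~ M : 'rV[R]_n -> 'rV[R]_n).
Proof.
have -> : mulmx^~ M = (fun x : 'rV[R]_n => \sum_i x 0 i *: row i M).
  by apply/funext => x; rewrite mulmx_sum_row.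
apply: (@continuous_big _ _ +%R 0 predT add_continuous) => i _ x.
exact: cvgZl (@coord_continuous R 1 n 0 i x).
Qed.

Lemma interior_mulmx_invol A M : M *m M = 1%:M ->
  (forall x, A x -> A (x *m M)) -> forall x, interior A x -> interior A (x *m M).
Proof.
move=> MM AM x Ax; apply: (@interior_pullback _ _ A A (mulmx^~ M) (x *m M)).
- exact: mulmx_continuous.
- by rewrite -mulmxA MM mulmx1.
- by move=> w /AM; rewrite -mulmxA MM mulmx1.
Qed.

Lemma fixmx_idem M x : M *m M = M -> fixmx M (x *m M).
Proof. by move=> MM; rewrite /fixmx /= -mulmxA MM. Qed.

Lemma image_mulmx_idem A M : M *m M = M -> (forall x, A x -> A (x *m M)) ->
  mulmx^~ M @` A = A `&` fixmx M.
Proof.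
move=> MM AM; apply/seteqP; split => [_ [x Ax <-]|y [Ay My]]; last by exists y.
by split; [exact: AM | exact: fixmx_idem].
Qed.

Lemma relint_fixmx_shift M A y v : relint (fixmx M) A y -> fixmx M v ->
  exists2 e, 0 < e & forall d, 0 <= d <= e -> A (y - d *: v).
Proof.
move=> [[U [oU [Uy UA]]] My] Mv.
have [e /= e0 eU] : exists2 e, 0 < e & ball y e `<=` U.
  by apply/nbhs_ballP; exact: open_nbhs_nbhs.
exists (e / (`|v| + 1)) => [|d /andP[d0 de]]; first by rewrite divr_gt0 ?ltr_wpDl.
apply: UA; split; last by rewrite /fixmx /= mulmxBl -scalemxAl Mv My.
apply: eU; rewrite -ball_normE /= opprB addrC subrK normrZ ger0_norm //.
rewrite (le_lt_trans (ler_wpM2r (normr_ge0 v) de)) // mulrAC ltr_pdivrMr ?ltr_wpDl //.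
by rewrite ltr_pM2l ?ltrDl.
Qed.

Lemma setoppK A : setopp (setopp A) = A.
Proof.
apply/seteqP; split => [_ [_ [a Aa <-] <-]|x Ax]; first by rewrite opprK.
by exists (- x); [exists x | rewrite opprK].
Qed.

Lemma fixmxN M x : fixmx M x -> fixmx M (- x).
Proof. by rewrite /fixmx /= mulNmx => ->. Qed.

Lemma setopp_fixmxI A M : setopp A `&` fixmx M = setopp (A `&` fixmx M).
Proof.
apply/seteqP; split => [x [[a Aa <-] /fixmxN]|_ [a [Aa /fixmxN Ma] <-]].
  by rewrite opprK => Ma; exists a.
by split => //; exists a.
Qed.

Lemma relint_setopp_sub M A :
  relint (fixmx M) (setopp A) `<=` setopp (relint (fixmx M) A).
Proof.
move=> y [[U [oU [Uy UA]]] My]; exists (- y); last by rewrite opprK.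
split; last exact: fixmxN.
exists (-%R @^-1` U); split; first by apply: open_comp oU => z _; exact: opp_continuous.
split=> [|w [Uw Mw]]; first by rewrite /= opprK.
by have [a Aa /oppr_inj <-] := UA _ (conj Uw (fixmxN Mw)).
Qed.

Lemma relint_setopp M A :
  relint (fixmx M) (setopp A) = setopp (relint (fixmx M) A).
Proof.
apply/seteqP; split; first exact: relint_setopp_sub.
move=> _ [x Ax <-]; have := relint_setopp_sub (M := M) (A := setopp A).
by rewrite setoppK => /(_ x Ax) [z Az <-]; rewrite opprK.
Qed.

Lemma closed_limit0 A a b c : closed A ->
  (forall r : R, 0 < r -> A (r *: a + b + (r * r) *: c)) -> A b.
Proof.
move=> clA Ar.
have lim_b : harmonic k *: a + b + (harmonic k * harmonic k) *: c @[k --> \oo] -->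
    0 *: a + b + (0 * 0) *: c.
  apply: cvgD; [apply: cvgD; [|exact: cvg_cst]|]; apply: cvgZl.
    exact: cvg_harmonic.
  exact: cvgM cvg_harmonic cvg_harmonic.
rewrite mul0r !scale0r add0r addr0 in lim_b.
apply: (closed_cvg _ clA _ _ lim_b); apply: nearW => k; apply: Ar.
by rewrite /harmonic /= invr_gt0 ltr0n.
Qed.

Section ComplementaryIdempotents.
Variables M1 M2 : 'M[R]_n.
Hypotheses (M11 : M1 *m M1 = M1) (M22 : M2 *m M2 = M2).
Hypotheses (M12 : M1 *m M2 = 0) (M21 : M2 *m M1 = 0).

Lemma fixmx_add : fixmx (M1 + M2) = setadd (fixmx M1) (fixmx M2).
Proof.
apply/seteqP; split => [y My|_ [a [b [Ma [Mb ->]]]]].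
  exists (y *m M1), (y *m M2).
  by split; [exact: fixmx_idem | split; [exact: fixmx_idem | rewrite -mulmxDr My]].
have aM2 : a *m M2 = 0 by rewrite -Ma -mulmxA M12 mulmx0.
have bM1 : b *m M1 = 0 by rewrite -Mb -mulmxA M21 mulmx0.
by rewrite /fixmx /= mulmxDr !mulmxDl Ma Mb aM2 bM1 addr0 add0r.
Qed.
End ComplementaryIdempotents.

End RowVectors.

Section ConvexCone.
Variables (R : realType) (n : nat) (C : set 'rV[R]_n).
Hypothesis cC : convex_cone C.
Implicit Types (x y : 'rV[R]_n).

Lemma cone0 : C 0. Proof. by case: cC. Qed.

Lemma coneD x y : C x -> C y -> C (x + y). Proof. by case: cC => _ [+ _]; apply. Qed.

Lemma coneZ (a : R) x : 0 <= a -> C x -> C (a *: x). Proof. by case: cC => _ [_]; apply. Qed.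

Lemma cone_sum (I : finType) (f : I -> 'rV[R]_n) : (forall i, C (f i)) -> C (\sum_i f i).
Proof. by move=> Cf; apply: big_ind => //; [exact: cone0 | exact: coneD]. Qed.

Lemma interior_addr x y : interior C x -> C y -> interior C (x + y).
Proof.
move=> Cx Cy; apply: (@interior_pullback _ _ C C (fun w => w - y)).
- exact: cvgB cvg_id (cvg_cst y).
- by rewrite addrK.
- by move=> w /= Cwy; rewrite -(subrK y w); exact: coneD.
Qed.

Lemma interiorZ (a : R) x : 0 < a -> interior C x -> interior C (a *: x).
Proof.
move=> a0 Cx; apply: (@interior_pullback _ _ C C (fun w => a^-1 *: w)).
- exact: cvgZr cvg_id.
- by rewrite scalerA mulVf ?gt_eqF ?scale1r.
- move=> w /= Cw; rewrite -[w]scale1r -(divff (lt0r_neq0 a0)) -scalerA.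
  by apply: coneZ; rewrite ?ltW.
Qed.

Lemma rV_coord_le_norm (d : 'rV[R]_n) i : `|d 0 i| <= `|d|.
Proof.
rewrite [`|d|]mx_normrE.
exact: (le_bigmax 0 (fun ij : 'I_1 * 'I_n => `|d ij.1 ij.2|) (0, i)).
Qed.

(* With ['e_i = a_i - b_i] and [a_i, b_i] in [C], every point at distance < 1
   from [\sum_i (a_i + b_i)] is a combination of the [a_i], [b_i] with
   nonnegative coefficients. *)
Lemma generating_interior : generating C -> exists c, interior C c.
Proof.
move=> genC.
have /choice [ab Hab] : forall i : 'I_n, exists p : 'rV[R]_n * 'rV[R]_n,
    [/\ C p.1, C p.2 & 'e_i = p.1 - p.2].
  by move=> i; have [a [b [Ca [Cb ei]]]] := genC 'e_i; exists (a, b).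
exists (\sum_i ((ab i).1 + (ab i).2)); apply/nbhs_ballP; exists 1 => //= z.
rewrite -ball_normE /= distrC => zc; set d := z - _ in zc.
have -> : z = \sum_i ((1 + d 0 i) *: (ab i).1 + (1 - d 0 i) *: (ab i).2).
  rewrite (eq_bigr (fun i => ((ab i).1 + (ab i).2) + d 0 i *: 'e_i)); last first.
    move=> i _; have [_ _ ->] := Hab i.
    by apply/rowP => j; rewrite !mxE; ring.
  by rewrite big_split /= -row_sum_delta /d addrC subrK.
apply: cone_sum => i; have [Ca Cb _] := Hab i.
have := le_lt_trans (rV_coord_le_norm d i) zc; rewrite ltr_norml => /andP[d1 d2].
by apply: coneD; apply: coneZ => //; lra.
Qed.

(* Rescale by [r = e^-t] and let [t] go to infinity. *)
Lemma cone_flow_limit (P0 P1 P2 : 'M[R]_n) : closed C ->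
  (forall (t : R) x, C x -> C (x *m (P0 + expR t *: P1 + expR (- t) *: P2))) ->
  forall x, C x -> C (x *m P1).
Proof.
move=> clC Cflow x Cx.
apply: (closed_limit0 (a := x *m P0) (c := x *m P2) clC) => r r0.
have := coneZ (ltW r0) (Cflow (- ln r) x Cx).
rewrite opprK expRN lnK ?posrE // !mulmxDr -!scalemxAr !scalerDr !scalerA.
by rewrite mulfV ?gt_eqF // scale1r.
Qed.

Section Involution.
Variable S : 'M[R]_n.
Hypotheses (SS : S *m S = 1%:M) (CS : forall x, C x -> C (x *m S)).

Lemma mulmx_avg x : x *m (2^-1 *: (1%:M + S)) = 2^-1 *: (x + x *m S).
Proof. by rewrite -scalemxAr mulmxDr mulmx1. Qed.

Lemma cone_mulmx_avg x : C x -> C (x *m (2^-1 *: (1%:M + S))).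
Proof.
by move=> Cx; rewrite mulmx_avg; apply: coneZ; [rewrite invr_ge0 ler0n | exact: coneD (CS Cx)].
Qed.

Lemma interior_mulmx_avg x : interior C x -> interior C (x *m (2^-1 *: (1%:M + S))).
Proof.
move=> Cx; rewrite mulmx_avg; apply: interiorZ; first by rewrite invr_gt0 ltr0n.
by apply: interior_addr => //; apply: interior_subset; exact: interior_mulmx_invol.
Qed.
End Involution.

Section Idempotent.
Variable M : 'M[R]_n.
Hypotheses (MM : M *m M = M) (CM : forall x, C x -> C (x *m M)).

Lemma image_interior_sub_relint :
  mulmx^~ M @` interior C `<=` relint (fixmx M) (C `&` fixmx M).
Proof.
move=> _ [x Cx <-]; split; last exact: fixmx_idem.
exists ((+%R^~ (x - x *m M)) @^-1` interior C); split.
  by apply: open_comp (@open_interior _ C) => z _; exact: cvgD cvg_id (cvg_cst _).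
split=> [|z [/interior_subset Cz Mz]]; first by rewrite /= addrCA subrr addr0.
split=> //; have := CM Cz.
by rewrite mulmxDl mulmxBl -mulmxA MM Mz subrr addr0.
Qed.

(* For small [e > 0], [y - e (c M)] is still in [C]; adding [e c] moves it
   into the interior without changing its image under [M]. *)
Lemma relint_sub_image_interior c : interior C c ->
  relint (fixmx M) (C `&` fixmx M) `<=` mulmx^~ M @` interior C.
Proof.
move=> Cc y Cy; have [e e0 Ce] := relint_fixmx_shift Cy (fixmx_idem c MM).
have [Cye Mye] : (C `&` fixmx M) (y - e *: (c *m M)) by apply: Ce; rewrite lexx ltW.
exists (y - e *: (c *m M) + e *: c).
  by rewrite addrC; apply: interior_addr => //; exact: interiorZ.
by rewrite mulmxDl Mye -scalemxAl subrK.
Qed.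

Lemma image_interior_idem c : interior C c ->
  mulmx^~ M @` interior C = relint (fixmx M) (C `&` fixmx M).
Proof.
move=> Cc; apply/seteqP; split; first exact: image_interior_sub_relint.
exact: relint_sub_image_interior Cc.
Qed.
End Idempotent.

Section ComplementaryIdempotents.
Variables M1 M2 : 'M[R]_n.
Hypotheses (M11 : M1 *m M1 = M1) (M22 : M2 *m M2 = M2).
Hypotheses (M12 : M1 *m M2 = 0) (M21 : M2 *m M1 = 0).
Hypotheses (CM1 : forall x, C x -> C (x *m M1)) (CM2 : forall x, C x -> C (x *m M2)).

Lemma cone_fixmx_add :
  C `&` fixmx (M1 + M2) = setadd (C `&` fixmx M1) (C `&` fixmx M2).
Proof.
apply/seteqP; split => [y [Cy My]|_ [a [b [[Ca Ma] [[Cb Mb] ->]]]]].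
  exists (y *m M1), (y *m M2).
  split; first by split; [exact: CM1 | exact: fixmx_idem].
  split; first by split; [exact: CM2 | exact: fixmx_idem].
  by rewrite -mulmxDr My.
by split; [exact: coneD | rewrite fixmx_add //; exists a, b].
Qed.

Lemma interior_fixmx_add c : interior C c -> fixmx (M1 + M2) c ->
  interior C `&` fixmx (M1 + M2) =
  setadd (relint (fixmx M1) (C `&` fixmx M1)) (relint (fixmx M2) (C `&` fixmx M2)).
Proof.
move=> Cc Mc; apply/seteqP; split => [y [Cy My]|_ [a [b [Ca [Cb ->]]]]].
  exists (y *m M1), (y *m M2).
  rewrite -(image_interior_idem M11 CM1 Cc) -(image_interior_idem M22 CM2 Cc).
  by split; [exists y | split; [exists y | rewrite -mulmxDr My]].
have [e1 e10 Ce1] := relint_fixmx_shift Ca (fixmx_idem c M11).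
have [e2 e20 Ce2] := relint_fixmx_shift Cb (fixmx_idem c M22).
pose d := Num.min e1 e2; have d0 : 0 < d by rewrite lt_min e10 e20.
have [Ca' _] : (C `&` fixmx M1) (a - d *: (c *m M1)).
  by apply: Ce1; rewrite ltW //= ge_min lexx.
have [Cb' _] : (C `&` fixmx M2) (b - d *: (c *m M2)).
  by apply: Ce2; rewrite ltW //= ge_min lexx orbT.
split; last by rewrite fixmx_add //; exists a, b; split; [case: Ca | split; [case: Cb |]].
have -> : a + b = d *: c + ((a - d *: (c *m M1)) + (b - d *: (c *m M2))).
  rewrite -[in d *: c]Mc mulmxDr scalerDr.
  by move: (c *m M1) (c *m M2) => u v; apply/rowP => i; rewrite !mxE; ring.
by apply: interior_addr; [exact: interiorZ | exact: coneD].
Qed.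
End ComplementaryIdempotents.
End ConvexCone.

Lemma diag_tripotent (R : realType) (n : nat) (h : 'M[R]_n) : diagonalizable h ->
  (forall a : R, eigenvalue h a -> a \in [:: -1; 0; 1]) -> h *m h *m h = h.
Proof.
move=> [P Pu /diagonalizable_forPex [D /(simmxP Pu) PhD]] hev.
have D3 i : D 0 i ^+ 3 = D 0 i.
  have : eigenvalue h (D 0 i).
    apply/eigenvalueP; exists (row i P).
      by rewrite -row_mul PhD mul_diag_mx; apply/rowP => j; rewrite !mxE.
    apply/eqP => /(congr1 (mulmx^~ (invmx P))); rewrite rowE mulmxK // mul0mx.
    by move/matrixP/(_ 0 i); rewrite !mxE !eqxx => /eqP; rewrite oner_eq0.
  by move/hev; rewrite !inE => /or3P [] /eqP ->; ring.
have dD3 : diag_mx D *m diag_mx D *m diag_mx D = diag_mx D.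
  apply/matrixP => a b; rewrite -mulmxA !mul_diag_mx !mxE.
  by case: eqVneq => [->|_]; rewrite ?mulr1n -?[RHS]D3 ?mulr0n ?mulr0 //; ring.
apply: (can_inj (mulKmx Pu)); rewrite !mulmxA PhD.
by rewrite -(mulmxA _ P h) PhD mulmxA -(mulmxA _ P h) PhD !mulmxA dD3.
Qed.

Ltac entrywise := apply/matrixP => i j; rewrite !mxE; field; by rewrite ?pnatr_eq0.

Section Tripotent.
Variables (R : realType) (n : nat) (h : 'M[R]_n).

Definition proj0 : 'M[R]_n := 1%:M - h *m h.
Definition proj1 : 'M[R]_n := 2^-1 *: (h + h *m h).
Definition projN1 : 'M[R]_n := 2^-1 *: (h *m h - h).
Definition ntau_mx : 'M[R]_n := 2 *: (h *m h) - 1%:M.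

Lemma p1_mulmx : p1 h = mulmx^~ proj1.
Proof. by apply/funext => x; rewrite /p1 -scalemxAr mulmxDr. Qed.

Lemma pm1_mulmx : pm1 h = mulmx^~ projN1.
Proof. by apply/funext => x; rewrite /pm1 -scalemxAr mulmxBr. Qed.

Lemma proj1_add_projN1 : proj1 + projN1 = h *m h.
Proof. by rewrite /proj1 /projN1; move: (h *m h) => hh; entrywise. Qed.

Lemma pminus_mulmx : pminus h = mulmx^~ (h *m h).
Proof. by apply/funext => x; rewrite /pminus p1_mulmx pm1_mulmx -mulmxDr proj1_add_projN1. Qed.

Lemma proj_sum : proj0 + proj1 + projN1 = 1%:M.
Proof. by rewrite -addrA proj1_add_projN1 subrK. Qed.

Lemma ntau_mulmx : (fun x => - tau h x) = mulmx^~ ntau_mx.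
Proof.
apply/funext => x; rewrite /tau -!addrA -opprD -/(pminus h x) pminus_mulmx /p0.
by rewrite /ntau_mx mulmxBr mulmx1 -scalemxAr; move: (x *m (h *m h)) => y; entrywise.
Qed.

Lemma hh_avg : h *m h = 2^-1 *: (1%:M + ntau_mx).
Proof. by rewrite /ntau_mx; move: (h *m h) => hh; entrywise. Qed.

Hypothesis h3 : h *m h *m h = h.

Lemma hh_idem : h *m h *m (h *m h) = h *m h.
Proof. by rewrite mulmxA h3. Qed.

Lemma proj1_h : proj1 *m h = proj1.
Proof. by rewrite /proj1 -scalemxAl mulmxDl h3 addrC. Qed.

Lemma projN1_h : projN1 *m h = - projN1.
Proof. by rewrite /projN1 -scalemxAl mulmxBl h3 -scalerN opprB. Qed.

Lemma proj0_h : proj0 *m h = 0.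
Proof. by rewrite /proj0 mulmxBl mul1mx h3 subrr. Qed.

Lemma proj1_idem : proj1 *m proj1 = proj1.
Proof.
rewrite {2}/proj1 -scalemxAr mulmxDr mulmxA !proj1_h.
by move: proj1 => P; entrywise.
Qed.

Lemma projN1_idem : projN1 *m projN1 = projN1.
Proof.
rewrite {2}/projN1 -scalemxAr mulmxBr mulmxA !projN1_h mulNmx projN1_h.
by move: projN1 => P; entrywise.
Qed.

Lemma proj1_projN1 : proj1 *m projN1 = 0.
Proof. by rewrite /projN1 -scalemxAr mulmxBr mulmxA !proj1_h subrr scaler0. Qed.

Lemma projN1_proj1 : projN1 *m proj1 = 0.
Proof.
by rewrite /proj1 -scalemxAr mulmxDr mulmxA !projN1_h mulNmx projN1_h opprK addNr scaler0.
Qed.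

Lemma ntau_mx_invol : ntau_mx *m ntau_mx = 1%:M.
Proof.
rewrite /ntau_mx mulmxBl mulmxBr -!scalemxAl -!scalemxAr hh_idem mulmx1 mul1mx.
by move: (h *m h) => hh; entrywise.
Qed.

Lemma eigsp1_fixmx : eigsp h 1 = fixmx proj1.
Proof.
apply/seteqP; split => x; rewrite /eigsp /fixmx /= scale1r => hx.
  by rewrite /proj1 -scalemxAr mulmxDr mulmxA !hx; move: x hx => y _; entrywise.
by rewrite -[in LHS]hx -mulmxA proj1_h.
Qed.

Lemma eigspN1_fixmx : eigsp h (-1) = fixmx projN1.
Proof.
apply/seteqP; split => x; rewrite /eigsp /fixmx /= scaleN1r => hx.
  rewrite /projN1 -scalemxAr mulmxBr mulmxA hx mulNmx hx opprK.
  by move: x hx => y _; entrywise.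
by rewrite -[in LHS]hx -mulmxA projN1_h mulmxN hx.
Qed.

Lemma proj0_eigsp0 x : eigsp h 0 (x *m proj0).
Proof. by rewrite /eigsp /= -mulmxA proj0_h mulmx0 scale0r. Qed.

Lemma expr_tripotent k :
  h ^+ k = (k == 0)%:R *: proj0 + proj1 + (-1) ^+ k *: projN1.
Proof.
elim: k => [|k IH]; first by rewrite expr0 !scale1r proj_sum.
rewrite exprSr IH -mulmxE !mulmxDl -scalemxAl proj0_h proj1_h -scalemxAl projN1_h.
by rewrite scaler0 add0r exprS scale0r add0r mulN1r scaleNr scalerN.
Qed.

Lemma matexp_tripotent (t : R) :
  matexp (t *: h) = proj0 + expR t *: proj1 + expR (- t) *: projN1.
Proof.
have expS_cvg (s : R) : (fun N => \sum_(k < N) k`!%:R^-1 * s ^+ k) @ \oo --> expR s.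
  rewrite (_ : (fun N => _) = series (exp_coeff s)); first exact: is_cvg_series_exp_coeff.
  apply/funext => N; rewrite /series /= big_mkord; apply: eq_bigr => k _.
  by rewrite /exp_coeff /= mulrC.
have delta_cvg : (fun N => \sum_(k < N) (k == 0%N :> nat)%:R) @ \oo --> (1 : R).
  apply: cvg_near_cst; near=> N.
  rewrite -(prednK (_ : 0 < N)%N) ?big_ord_recl ?big1 ?addr0 //; last by near: N; exists 1%N.
have term (k : nat) : k`!%:R^-1 *: (t *: h) ^+ k = (k == 0)%:R *: proj0 +
    (k`!%:R^-1 * t ^+ k) *: proj1 + (k`!%:R^-1 * (- t) ^+ k) *: projN1.
  rewrite exprZmx expr_tripotent.
  case: k => [|k]; move: proj0 proj1 projN1 => A B D; apply/matrixP => i j.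
    by rewrite !mxE /= !expr0 invr1; ring.
  by rewrite !mxE /= [(- t) ^+ _]exprNn; ring.
rewrite /matexp; under eq_fun => N do
  rewrite (eq_bigr _ (fun (k : 'I_N) _ => term k)) !big_split /= -!scaler_suml.
rewrite -[proj0 in RHS]scale1r; apply: cvg_lim; first exact: norm_hausdorff.
by apply: cvgD; [apply: cvgD|]; apply: cvgZl.
Unshelve. all: by end_near.
Qed.

End Tripotent.

Section InvariantCone.
Variables (R : realType) (n : nat) (h : 'M[R]_n) (C : set 'rV[R]_n).
Hypotheses (h3 : h *m h *m h = h) (cC : convex_cone C).

Section Flow.
Hypotheses (clC : closed C)
  (Cexp : forall t : R, (fun x => x *m matexp (t *: h)) @` C = C).

Let Cflow t x : C x -> C (x *m (proj0 h + expR t *: proj1 h + expR (- t) *: projN1 h)).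
Proof. by move=> Cx; rewrite -(matexp_tripotent h3) -(Cexp t); exists x. Qed.

Lemma cone_mulmx_proj1 x : C x -> C (x *m proj1 h).
Proof. exact: (cone_flow_limit cC clC Cflow). Qed.

Lemma cone_mulmx_projN1 x : C x -> C (x *m projN1 h).
Proof.
apply: (cone_flow_limit cC clC (P0 := proj0 h) (P2 := proj1 h)) => t y Cy.
by have := Cflow (- t) Cy; rewrite opprK addrAC.
Qed.
End Flow.

Section Tau.
Hypothesis Ctau : (fun x => - tau h x) @` C = C.

Let Cntau x : C x -> C (x *m ntau_mx h).
Proof. by move=> Cx; rewrite -Ctau ntau_mulmx; exists x. Qed.

Lemma cone_mulmx_hh x : C x -> C (x *m (h *m h)).
Proof. by rewrite hh_avg => Cx; exact: (cone_mulmx_avg cC Cntau Cx). Qed.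

Lemma interior_mulmx_hh x : interior C x -> interior C (x *m (h *m h)).
Proof.
by rewrite hh_avg => Cx; exact: (interior_mulmx_avg cC (ntau_mx_invol h3) Cntau Cx).
Qed.
End Tau.
End InvariantCone.

Theorem lemma3p2 (R : realType) (n : nat) (h : 'M[R]_n) (C : set 'rV[R]_n) :
  diagonalizable h ->
  (forall a : R, eigenvalue h a -> a \in [:: -1; 0; 1]) ->
  convex_cone C -> pointed C -> generating C -> closed C ->
  (forall t : R, (fun x => x *m matexp (t *: h)) @` C = C) ->
  (fun x => - tau h x) @` C = C ->
  let Cp := C `&` eigsp h 1 in
  let Cm := setopp C `&` eigsp h (-1) in
  let Em := setadd (eigsp h 1) (eigsp h (-1)) in
  (* (i) *)
  [/\ p1 h @` C = Cp,
      pm1 h @` C = setopp Cm,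
      p1 h @` (interior C) = relint (eigsp h 1) Cp /\ relint (eigsp h 1) Cp !=set0 &
      pm1 h @` (interior C) = setopp (relint (eigsp h (-1)) Cm) /\
        relint (eigsp h (-1)) Cm !=set0] /\
  (* (ii) *)
  [/\ pminus h @` C = C `&` Em,
      C `&` Em = setadd Cp (setopp Cm),
      pminus h @` (interior C) = interior C `&` Em &
      interior C `&` Em =
        setadd (relint (eigsp h 1) Cp) (setopp (relint (eigsp h (-1)) Cm))] /\
  (* (iii) *)
  C `<=` setadd (setadd Cp (eigsp h 0)) (setopp Cm).
Proof.
move=> hdiag hev cC _ genC clC Cexp Ctau Cp Cm Em.
have h3 := diag_tripotent hdiag hev.
have [c Cc] := generating_interior cC genC.
have C1 := cone_mulmx_proj1 h3 cC clC Cexp.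
have CN1 := cone_mulmx_projN1 h3 cC clC Cexp.
have Chh := cone_mulmx_hh cC Ctau; have iChh := interior_mulmx_hh h3 cC Ctau.
have P11 := proj1_idem h3; have PN1N1 := projN1_idem h3.
have P1N1 := proj1_projN1 h3; have PN11 := projN1_proj1 h3.
rewrite /Cp /Cm /Em eigsp1_fixmx // eigspN1_fixmx // -fixmx_add // proj1_add_projN1.
rewrite p1_mulmx pm1_mulmx pminus_mulmx setopp_fixmxI setoppK relint_setopp setoppK.
split; [split | split; [split |]].
- exact: image_mulmx_idem.
- exact: image_mulmx_idem.
- split; first exact: image_interior_idem Cc.
  by exists (c *m proj1 h); rewrite -(image_interior_idem cC P11 C1 Cc); exists c.
- split; first exact: image_interior_idem Cc.
  exists (- (c *m projN1 h)), (c *m projN1 h) => //.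
  by rewrite -(image_interior_idem cC PN1N1 CN1 Cc); exists c.
- exact: image_mulmx_idem (hh_idem h3) Chh.
- by rewrite -proj1_add_projN1; exact: cone_fixmx_add.
- exact: image_mulmx_idem (hh_idem h3) iChh.
- rewrite -proj1_add_projN1; apply: (interior_fixmx_add cC _ _ _ _ _ _ (iChh c Cc)) => //.
  by rewrite proj1_add_projN1; exact: fixmx_idem (hh_idem h3).
- move=> x Cx; exists (x *m proj1 h + x *m proj0 h), (x *m projN1 h); split.
    exists (x *m proj1 h), (x *m proj0 h).
    by split; [split; [exact: C1 | exact: fixmx_idem] | split; first exact: proj0_eigsp0].
  split; first by split; [exact: CN1 | exact: fixmx_idem].
  by rewrite [x *m proj1 h + _]addrC -!mulmxDr proj_sum mulmx1.
Qed.
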